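(* In the cell FDE setting described in the context, assume (H1), (H2), (H3) and $q(0)>0$. Let $\phi=(\varphi,\psi)\in X_+$ with $\varphi(0)>0$ and let $(w,v)=(w^\phi,v^\phi)$. If $v(t)\to0$ as $t\to\infty$, then $w(t)\to\infty$ as $t\to\infty$. In particular, $(w(t),v(t))$ does not converge to $(0,0)$ as $t\to\infty$.
   Context: Let $h>0$, $R_-<0$, $I:=(R_-,\infty)$. $\|\phi\|_0:=\max_{\theta\in[-h,0]}|\phi(\theta)|$, $\|\phi\|_1:=\|\phi\|_0+\|\phi'\|_0$; $x_t(s):=x(t+s)$, $s\in[-h,0]$. Let $U:=C^1([-h,0],\mathbb R)\times C^1([-h,0],I)$, $U_+:=C^1([-h,0],[0,\infty)^2)$, $q:I\to\mathbb R$, $j:U\to\mathbb R$, $\mu\ge0$. Cell FDE: $w'(t)=q(v(t))w(t)$, $v'(t)=j(w_t,v_t)-\mu v(t)$, $t>0$, $(w_0,v_0)=(\varphi,\psi)$. $F(\varphi,\psi):=(q(\psi(0))\varphi(0),j(\varphi,\psi)-\mu\psi(0))$, $X:=\{\phi\in U:\phi'(0)=F(\phi)\}$, $X_+:=X\cap U_+$. Solutions are $C^1$ maps $x=(w,v)$ on $[-h,t_* )$ with $x_0=\phi$, $x_t\in U$, satisfying the equations on $(0,t_* )$. (S): $f$ is $C^1$, each $Df(\phi)$ extends to a linear map on $C([-h,0],\mathbb R^n)$ and $(\phi,\chi)\mapsto D_ef(\phi)\chi$ is continuous. (sLb) on $\mathcal O_+$: for each $\|\cdot\|_1$-bounded $B\subset\mathcal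 O_+$ there is $L_B$ with $|f(\phi)-f(\chi)|\le L_B\|\phi-\chi\|_0$ on $B$. (H1): $j$ satisfies (S) on $U$, (sLb) on $U_+$, $j\ge0$ on $U_+$, and $j(B_1\times B_2)$ is bounded whenever $B_1\times B_2\subset U_+$ with $B_1$ bounded. (H2): $q$ bounded and $C^1$. (H3): $X_+\neq\emptyset$. Under (H1)-(H3) each $\phi\in X_+$ has a unique solution on $[-h,\infty)$ with segments in $X_+$. *)

From Stdlib Require Import Reals ClassicalEpsilon.
From Coquelicot Require Import Coquelicot.
Open Scope R_scope.

(* Functions on [-h,0] are represented as R -> R; only their values on
   [-h,0] are meaningful (functionals are required to respect this). *)
Definition seg (h s : R) : Prop := -h <= s <= 0.

Definition eq_on (D : R -> Prop) (f g : R -> R) : Prop := forall s, D s -> f s = g s.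

Definition fadd (f g : R -> R) : R -> R := fun s => f s + g s.
Definition fsub (f g : R -> R) : R -> R := fun s => f s - g s.

Definition cont_on (D : R -> Prop) (f : R -> R) : Prop :=
  forall s, D s -> forall eps, 0 < eps -> exists delta, 0 < delta /\
    forall y, D y -> Rabs (y - s) < delta -> Rabs (f y - f s) < eps.

(* f is C^1 on D with derivative f' (derivatives taken within D, i.e.
   one-sided at endpoints) *)
Definition is_C1_on (D : R -> Prop) (f f' : R -> R) : Prop :=
  cont_on D f' /\
  forall s, D s -> forall eps, 0 < eps -> exists delta, 0 < delta /\
    forall y, D y -> 0 < Rabs (y - s) < delta ->
      Rabs ((f y - f s) / (y - s) - f' s) <= eps.

Definition C1_on (D : R -> Prop) (f : R -> R) : Prop := exists f', is_C1_on D f f'.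

(* the derivative of a C^1 function on [-h,0] (unique on [-h,0] when h > 0) *)
Definition dC1 (h : R) (f : R -> R) : R -> R :=
  epsilon (inhabits (fun _ : R => 0)) (fun f' => is_C1_on (seg h) f f').

Definition norm0 (h : R) (f : R -> R) : R :=
  real (Lub_Rbar (fun y => exists s, seg h s /\ y = Rabs (f s))).

Definition norm0_2 (h : R) (f g : R -> R) : R := Rmax (norm0 h f) (norm0 h g).
Definition norm1_2 (h : R) (f g : R -> R) : R :=
  norm0_2 h f g + norm0_2 h (dC1 h f) (dC1 h g).
Definition norm1 (h : R) (f : R -> R) : R := norm0 h f + norm0 h (dC1 h f).

(* U = C^1([-h,0],R) x C^1([-h,0],I),  I = (Rm, oo) *)
Definition inU (h Rm : R) (f g : R -> R) : Prop :=
  C1_on (seg h) f /\ C1_on (seg h) g /\ (forall s, seg h s -> Rm < g s).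

Definition inUp (h : R) (f g : R -> R) : Prop :=
  C1_on (seg h) f /\ C1_on (seg h) g /\ (forall s, seg h s -> 0 <= f s /\ 0 <= g s).

Definition C1nonneg (h : R) (f : R -> R) : Prop :=
  C1_on (seg h) f /\ (forall s, seg h s -> 0 <= f s).

Definition functional := (R -> R) -> (R -> R) -> R.

Definition respects (h : R) (j : functional) : Prop :=
  forall f g f2 g2, eq_on (seg h) f f2 -> eq_on (seg h) g g2 -> j f g = j f2 g2.

Definition cond_S (h Rm : R) (j : functional) : Prop :=
  exists De : (R -> R) -> (R -> R) -> functional,
    (* De f g is a map on C([-h,0],R^2) *)
    (forall f g c1 c2 d1 d2, eq_on (seg h) c1 d1 -> eq_on (seg h) c2 d2 ->
        De f g c1 c2 = De f g d1 d2) /\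
    (forall f g, inU h Rm f g -> forall a b c1 c2 d1 d2,
        cont_on (seg h) c1 -> cont_on (seg h) c2 ->
        cont_on (seg h) d1 -> cont_on (seg h) d2 ->
        De f g (fun s => a * c1 s + b * d1 s) (fun s => a * c2 s + b * d2 s)
        = a * De f g c1 c2 + b * De f g d1 d2) /\
    (* its restriction to C^1 is the Frechet derivative Dj(f,g) of j *)
    (forall f g, inU h Rm f g -> forall eps, 0 < eps -> exists delta, 0 < delta /\
        forall c1 c2, C1_on (seg h) c1 -> C1_on (seg h) c2 ->
          norm1_2 h c1 c2 < delta -> inU h Rm (fadd f c1) (fadd g c2) ->
          Rabs (j (fadd f c1) (fadd g c2) - j f g - De f g c1 c2)
            <= eps * norm1_2 h c1 c2) /\
    (* j is C^1: (f,g) |-> Dj(f,g) is continuous in operator norm *)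
    (forall f g, inU h Rm f g -> forall eps, 0 < eps -> exists delta, 0 < delta /\
        forall f2 g2, inU h Rm f2 g2 -> norm1_2 h (fsub f2 f) (fsub g2 g) < delta ->
        forall c1 c2, C1_on (seg h) c1 -> C1_on (seg h) c2 ->
          Rabs (De f2 g2 c1 c2 - De f g c1 c2) <= eps * norm1_2 h c1 c2) /\
    (forall f g c1 c2, inU h Rm f g -> cont_on (seg h) c1 -> cont_on (seg h) c2 ->
      forall eps, 0 < eps -> exists delta, 0 < delta /\
        forall f2 g2 d1 d2, inU h Rm f2 g2 -> cont_on (seg h) d1 -> cont_on (seg h) d2 ->
          norm1_2 h (fsub f2 f) (fsub g2 g) < delta ->
          norm0_2 h (fsub d1 c1) (fsub d2 c2) < delta ->
          Rabs (De f2 g2 d1 d2 - De f g c1 c2) < eps).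

Definition cond_sLb (h : R) (j : functional) : Prop :=
  forall B : (R -> R) -> (R -> R) -> Prop,
    (forall f g, B f g -> inUp h f g) ->
    (exists c, forall f g, B f g -> norm1_2 h f g <= c) ->
    exists L, forall f g f2 g2, B f g -> B f2 g2 ->
      Rabs (j f g - j f2 g2) <= L * norm0_2 h (fsub f f2) (fsub g g2).

Definition H1 (h Rm : R) (j : functional) : Prop :=
  respects h j /\ cond_S h Rm j /\ cond_sLb h j /\
  (forall f g, inUp h f g -> 0 <= j f g) /\
  (forall B1 B2 : (R -> R) -> Prop,
     (forall f, B1 f -> C1nonneg h f) -> (forall g, B2 g -> C1nonneg h g) ->
     (exists c, forall f, B1 f -> norm1 h f <= c) ->
     exists M, forall f g, B1 f -> B2 g -> Rabs (j f g) <= M).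

Definition H2 (Rm : R) (q : R -> R) : Prop :=
  (exists M, forall x, Rm < x -> Rabs (q x) <= M) /\
  (forall x, Rm < x -> ex_derive q x /\ continuous (Derive q) x).

Definition inX (h Rm mu : R) (q : R -> R) (j : functional) (f g : R -> R) : Prop :=
  inU h Rm f g /\
  dC1 h f 0 = q (g 0) * f 0 /\
  dC1 h g 0 = j f g - mu * g 0.

Definition inXp (h Rm mu : R) (q : R -> R) (j : functional) (f g : R -> R) : Prop :=
  inX h Rm mu q j f g /\ inUp h f g.

Definition H3 (h Rm mu : R) (q : R -> R) (j : functional) : Prop :=
  exists f g, inXp h Rm mu q j f g.

Definition shift (x : R -> R) (t : R) : R -> R := fun s => x (t + s).

Definition is_solution (h Rm mu : R) (q : R -> R) (j : functional)
    (f g w v : R -> R) : Prop :=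
  C1_on (fun s => -h <= s) w /\ C1_on (fun s => -h <= s) v /\
  (forall s, seg h s -> w s = f s /\ v s = g s) /\
  (forall t, 0 <= t -> inU h Rm (shift w t) (shift v t)) /\
  (forall t, 0 < t ->
     is_derive w t (q (v t) * w t) /\
     is_derive v t (j (shift w t) (shift v t) - mu * v t)).

From Stdlib Require Import Reals Lra.
From Coquelicot Require Import Coquelicot.
Open Scope R_scope.

(* On (0, oo) the first equation is the scalar linear ODE w' = a w with the
   continuous coefficient a = q o v, so w t = w t1 * exp (int_t1^t a).  If v -> 0
   then a -> q 0 > 0, the exponent grows at least linearly, and w -> oo as soon as
   w t1 > 0 for some t1 > 0; such a t1 exists by continuity of w at 0, where
   w 0 = f 0 > 0.  In particular w cannot tend to 0. *)

Lemma is_lim_affine_p_infty (b c : R) :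
  0 < c -> is_lim (fun t => b + c * t) p_infty p_infty.
Proof.
  intros Hc.
  eapply is_lim_plus; [apply is_lim_const | apply is_lim_scal_l, is_lim_id |].
  simpl; destruct Rle_dec; [destruct Rle_lt_or_eq_dec|]; try lra.
  constructor.
Qed.

Lemma is_lim_eventually_gt (a : R -> R) (l c : R) :
  is_lim a p_infty l -> c < l -> exists T, forall t, T < t -> c < a t.
Proof.
  intros Ha Hcl.
  exact (Ha _ (open_Rbar_gt' l c Hcl)).
Qed.

Lemma is_lim_p_infty_of_derive (F a : R -> R) (t0 l : R) :
  (forall t, t0 < t -> is_derive F t (a t)) ->
  is_lim a p_infty l -> 0 < l -> is_lim F p_infty p_infty.
Proof.
  intros HF Ha Hl.
  destruct (is_lim_eventually_gt a l (l / 2) Ha ltac:(lra)) as [T0 HT0].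
  set (T := Rmax T0 t0 + 1).
  assert (HT : T0 < T /\ t0 < T)
    by (unfold T; split; [pose proof (Rmax_l T0 t0) | pose proof (Rmax_r T0 t0)]; lra).
  apply is_lim_le_p_loc with (f := fun t => (F T - l / 2 * T) + l / 2 * t);
    [| apply is_lim_affine_p_infty; lra].
  exists T; intros t Ht.
  destruct (MVT_gen F T t a) as [c [Hc HFc]].
  - intros x Hx; apply HF.
    revert Hx; unfold Rmin, Rmax; destruct Rle_dec; lra.
  - intros x Hx; apply continuity_pt_filterlim, (ex_derive_continuous (V := R_NormedModule)).
    eexists; apply HF.
    revert Hx; unfold Rmin, Rmax; destruct Rle_dec; lra.
  - revert Hc; unfold Rmin, Rmax; destruct Rle_dec; intros Hc; [|lra].
    assert (l / 2 < a c) by (apply HT0; lra).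
    nra.
Qed.

Section LinearODE.

Variables (t0 : R) (a : R -> R).
Hypothesis a_cont : forall t, t0 < t -> continuous a t.

Lemma is_derive_RInt_from (t1 t : R) :
  t0 < t1 -> t0 < t -> is_derive (RInt a t1) t (a t).
Proof.
  intros Ht1 Ht.
  apply is_derive_RInt with t1; [| exact (a_cont t Ht)].
  assert (Hd : 0 < t - t0) by lra.
  exists (mkposreal _ Hd); intros y Hy.
  apply (RInt_correct (V := R_CompleteNormedModule)), ex_RInt_continuous.
  intros z Hz; apply a_cont.
  cbn in Hy; unfold AbsRing_ball, abs, minus, plus, opp in Hy; simpl in Hy.
  apply Rabs_def2 in Hy.
  revert Hz; unfold Rmin, Rmax; destruct Rle_dec; lra.
Qed.

Lemma linear_ode_exp_RInt (w : R -> R) (t1 : R) :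
  (forall t, t0 < t -> is_derive w t (a t * w t)) -> t0 < t1 ->
  forall t, t0 < t -> w t = w t1 * exp (RInt a t1 t).
Proof.
  intros Hw Ht1 t Ht.
  set (z := fun x => w x * exp (- RInt a t1 x)).
  assert (Hz : forall x, t0 < x -> is_derive z x 0).
  { intros x Hx.
    replace 0 with (a x * w x * exp (- RInt a t1 x) + w x * (- a x * exp (- RInt a t1 x)))
      by ring.
    apply (is_derive_mult w (fun y => exp (- RInt a t1 y))); [exact (Hw x Hx) | |].
    - apply (is_derive_comp exp (fun y => - RInt a t1 y)); [apply is_derive_exp |].
      now apply (is_derive_opp (RInt a t1)), is_derive_RInt_from.
    - exact Rmult_comm. }
  assert (Hz_const : z t = z t1).
  { destruct (MVT_gen z t1 t (fun _ => 0)) as [c [_ Hc]].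
    - intros x Hx; apply Hz.
      revert Hx; unfold Rmin, Rmax; destruct Rle_dec; lra.
    - intros x Hx; apply continuity_pt_filterlim, (ex_derive_continuous (V := R_NormedModule)).
      exists 0; apply Hz.
      revert Hx; unfold Rmin, Rmax; destruct Rle_dec; lra.
    - lra. }
  unfold z in Hz_const.
  rewrite (RInt_point t1 a : RInt a t1 t1 = 0), Ropp_0, exp_0, Rmult_1_r in Hz_const.
  rewrite <- Hz_const, Rmult_assoc, <- exp_plus, Rplus_opp_l, exp_0; ring.
Qed.

Lemma linear_ode_is_lim_p_infty (w : R -> R) (t1 l : R) :
  (forall t, t0 < t -> is_derive w t (a t * w t)) ->
  is_lim a p_infty l -> 0 < l -> t0 < t1 -> 0 < w t1 ->
  is_lim w p_infty p_infty.
Proof.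
  intros Hw Ha Hl Ht1 Hwt1.
  apply is_lim_ext_loc with (fun t => w t1 * exp (RInt a t1 t)).
  { exists t0; intros t Ht; symmetry; exact (linear_ode_exp_RInt w t1 Hw Ht1 t Ht). }
  replace p_infty with (Rbar_mult (w t1) p_infty) at 2
    by (simpl; destruct Rle_dec; [destruct Rle_lt_or_eq_dec|]; auto; lra).
  apply is_lim_scal_l.
  apply (is_lim_comp exp (RInt a t1) p_infty p_infty p_infty); [apply is_lim_exp_p | |].
  - apply (is_lim_p_infty_of_derive _ a t0 l); auto.
    intros t Ht; exact (is_derive_RInt_from t1 t Ht1 Ht).
  - exists 0; intros; discriminate.
Qed.

End LinearODE.

Lemma is_C1_on_cont_on (D : R -> Prop) (f f' : R -> R) :
  is_C1_on D f f' -> cont_on D f.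
Proof.
  intros [_ Hdiff] s Hs eps Heps.
  destruct (Hdiff s Hs 1 Rlt_0_1) as [d [Hd Hq]].
  set (K := Rabs (f' s) + 1).
  assert (HK : 0 < K) by (unfold K; pose proof (Rabs_pos (f' s)); lra).
  exists (Rmin d (eps / K)); split; [apply Rmin_pos; [lra | apply Rdiv_lt_0_compat; lra] |].
  intros y Hy Hys.
  destruct (Req_dec y s) as [-> | Hne]; [rewrite Rminus_diag, Rabs_R0; exact Heps |].
  assert (Hys0 : 0 < Rabs (y - s)) by (apply Rabs_pos_lt; lra).
  assert (Hslope : Rabs ((f y - f s) / (y - s)) <= K).
  { apply Hq in Hy; [| split; [exact Hys0 | apply (Rlt_le_trans _ _ _ Hys), Rmin_l]].
    pose proof (Rabs_triang_inv ((f y - f s) / (y - s)) (f' s)); unfold K; lra. }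
  replace (f y - f s) with ((f y - f s) / (y - s) * (y - s)) by (field; lra).
  rewrite Rabs_mult.
  apply (Rle_lt_trans _ (K * Rabs (y - s)));
    [apply Rmult_le_compat_r; [apply Rabs_pos | exact Hslope] |].
  assert (Hlt : Rabs (y - s) < eps / K) by (apply (Rlt_le_trans _ _ _ Hys), Rmin_r).
  apply (Rmult_lt_compat_l K) in Hlt; [| exact HK].
  replace (K * (eps / K)) with eps in Hlt by (field; lra); exact Hlt.
Qed.

Lemma cont_on_pos_right (D : R -> Prop) (f : R -> R) (s : R) :
  cont_on D f -> (forall y, s <= y -> D y) -> 0 < f s -> exists t, s < t /\ 0 < f t.
Proof.
  intros Hf HD Hpos.
  destruct (Hf s (HD s (Rle_refl s)) (f s) Hpos) as [d [Hd Hnear]].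
  exists (s + d / 2); split; [lra |].
  assert (Hclose : Rabs (f (s + d / 2) - f s) < f s).
  { apply Hnear; [apply HD; lra |].
    replace (s + d / 2 - s) with (d / 2) by ring; rewrite Rabs_pos_eq; lra. }
  apply Rabs_def2 in Hclose; lra.
Qed.

Lemma solution_growth_rate_cont (h Rm mu : R) (q : R -> R) (j : functional)
    (f g w v : R -> R) :
  0 <= h -> H2 Rm q -> is_solution h Rm mu q j f g w v ->
  forall t, 0 < t -> continuous (fun s => q (v s)) t.
Proof.
  intros Hh [_ Hq] [_ [_ [_ [HU Hder]]]] t Ht.
  assert (Hvt : Rm < v t).
  { destruct (HU t (Rlt_le _ _ Ht)) as [_ [_ HI]].
    specialize (HI 0 ltac:(unfold seg; lra)).
    unfold shift in HI; rewrite Rplus_0_r in HI; exact HI. }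
  apply (continuous_comp v q); apply (ex_derive_continuous (V := R_NormedModule)).
  - eexists; apply (Hder t Ht).
  - apply (Hq (v t) Hvt).
Qed.

Theorem lemma17 (h Rm mu : R) (q : R -> R) (j : functional)
    (f g w v : R -> R) :
  0 < h -> Rm < 0 -> 0 <= mu ->
  H1 h Rm j -> H2 Rm q -> H3 h Rm mu q j -> 0 < q 0 ->
  inXp h Rm mu q j f g -> 0 < f 0 ->
  is_solution h Rm mu q j f g w v ->
  (forall t, 0 <= t -> inXp h Rm mu q j (shift w t) (shift v t)) ->
  (is_lim v p_infty 0 -> is_lim w p_infty p_infty) /\
  ~ (is_lim w p_infty 0 /\ is_lim v p_infty 0).
Proof.
  intros Hh HRm _ _ HqC1 _ Hq0 _ Hf0 Hsol _.
  pose proof Hsol as [[w' Hw'] [_ [Hinit [_ Hder]]]].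
  assert (Hw0 : 0 < w 0) by (rewrite (proj1 (Hinit 0 ltac:(unfold seg; lra))); exact Hf0).
  destruct (cont_on_pos_right _ w 0 (is_C1_on_cont_on _ w w' Hw')) as [t1 [Ht1 Hwt1]];
    [intros y Hy; lra | exact Hw0 |].
  assert (Hgrowth : is_lim v p_infty 0 -> is_lim w p_infty p_infty).
  { intros Hv.
    apply (linear_ode_is_lim_p_infty 0 (fun s => q (v s))
             (solution_growth_rate_cont h Rm mu q j f g w v (Rlt_le _ _ Hh) HqC1 Hsol)
             w t1 (q 0)); auto.
    - intros t Ht; exact (proj1 (Hder t Ht)).
    - apply is_lim_comp_continuous; [exact Hv |].
      apply (ex_derive_continuous (V := R_NormedModule)), (proj2 HqC1 0 HRm). }
  split; [exact Hgrowth |].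
  intros [Hw Hv].
  pose proof (is_lim_unique _ _ _ Hw) as Hw_lim.
  rewrite (is_lim_unique _ _ _ (Hgrowth Hv)) in Hw_lim; discriminate.
Qed.
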